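(* Let $G$ be a Polish group. Then the family of Haar meager subsets of $G$ is a $\sigma$-ideal, i.e. every subset of a Haar meager set is Haar meager and the union of countably many Haar meager sets is Haar meager.
   Context: Let $G$ be a Polish group (not necessarily abelian). A set $A\subseteq G$ is called Haar meager if there exist a Borel set $B\subseteq G$ with $A\subseteq B$, a compact metric space $K$, and a continuous map $f\colon K\to G$ such that $f^{-1}(gBh)$ is meager in $K$ for every $g,h\in G$. *)

From Stdlib Require Import Reals List.
Open Scope R_scope.

Definition is_metric {X : Type} (d : X -> X -> R) : Prop :=
  (forall x y, 0 <= d x y) /\
  (forall x y, d x y = 0 <-> x = y) /\
  (forall x y, d x y = d y x) /\
  (forall x y z, d x z <= d x y + d y z).

Definition ball {X : Type} (d : X -> X -> R) (x : X) (r : R) : X -> Prop :=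
  fun y => d x y < r.

Definition m_open {X : Type} (d : X -> X -> R) (U : X -> Prop) : Prop :=
  forall x, U x -> exists r, 0 < r /\ forall y, ball d x r y -> U y.

Definition m_closure {X : Type} (d : X -> X -> R) (A : X -> Prop) : X -> Prop :=
  fun x => forall r, 0 < r -> exists a, A a /\ d x a < r.

Definition nowhere_dense {X : Type} (d : X -> X -> R) (A : X -> Prop) : Prop :=
  ~ (exists x r, 0 < r /\ forall y, ball d x r y -> m_closure d A y).

Definition meager {X : Type} (d : X -> X -> R) (A : X -> Prop) : Prop :=
  exists N : nat -> X -> Prop,
    (forall n, nowhere_dense d (N n)) /\
    (forall x, A x -> exists n, N n x).

Definition cauchy {X : Type} (d : X -> X -> R) (s : nat -> X) : Prop :=
  forall eps, 0 < eps -> exists N, forall m n, (N <= m)%nat -> (N <= n)%nat ->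
    d (s m) (s n) < eps.

Definition converges_to {X : Type} (d : X -> X -> R) (s : nat -> X) (l : X) : Prop :=
  forall eps, 0 < eps -> exists N, forall n, (N <= n)%nat -> d (s n) l < eps.

Definition complete {X : Type} (d : X -> X -> R) : Prop :=
  forall s, cauchy d s -> exists l, converges_to d s l.

Definition separable {X : Type} (d : X -> X -> R) : Prop :=
  exists s : nat -> X, forall x r, 0 < r -> exists n, d x (s n) < r.

Definition compact {X : Type} (d : X -> X -> R) : Prop :=
  forall (I : Type) (U : I -> X -> Prop),
    (forall i, m_open d (U i)) ->
    (forall x, exists i, U i x) ->
    exists l : list I, forall x, exists i, In i l /\ U i x.

Definition m_continuous {X Y : Type} (dX : X -> X -> R) (dY : Y -> Y -> R)
  (f : X -> Y) : Prop :=
  forall x eps, 0 < eps -> exists delta, 0 < delta /\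
    forall x', dX x x' < delta -> dY (f x) (f x') < eps.

(** Borel sets: the sigma-algebra generated by the open sets
    (with a constructor making it closed under extensional equality of sets). *)
Inductive borel {X : Type} (d : X -> X -> R) : (X -> Prop) -> Prop :=
  | borel_open : forall U, m_open d U -> borel d U
  | borel_compl : forall A, borel d A -> borel d (fun x => ~ A x)
  | borel_union : forall A : nat -> X -> Prop,
      (forall n, borel d (A n)) -> borel d (fun x => exists n, A n x)
  | borel_ext : forall A B, borel d A -> (forall x, A x <-> B x) -> borel d B.

Record PolishGroup := {
  pg_carrier :> Type;
  pg_mul : pg_carrier -> pg_carrier -> pg_carrier;
  pg_inv : pg_carrier -> pg_carrier;
  pg_one : pg_carrier;
  pg_mulA : forall x y z, pg_mul x (pg_mul y z) = pg_mul (pg_mul x y) z;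
  pg_mul1l : forall x, pg_mul pg_one x = x;
  pg_mul1r : forall x, pg_mul x pg_one = x;
  pg_mulVl : forall x, pg_mul (pg_inv x) x = pg_one;
  pg_mulVr : forall x, pg_mul x (pg_inv x) = pg_one;
  pg_dist : pg_carrier -> pg_carrier -> R;
  pg_metric : is_metric pg_dist;
  pg_complete : complete pg_dist;
  pg_separable : separable pg_dist;
  pg_mul_cont : forall x y eps, 0 < eps -> exists delta, 0 < delta /\
      forall x' y', pg_dist x x' < delta -> pg_dist y y' < delta ->
        pg_dist (pg_mul x y) (pg_mul x' y') < eps;
  pg_inv_cont : m_continuous pg_dist pg_dist pg_inv
}.

Record CompactMetricSpace := {
  cm_carrier :> Type;
  cm_dist : cm_carrier -> cm_carrier -> R;
  cm_metric : is_metric cm_dist;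
  cm_compact : compact cm_dist;
  cm_nonempty : inhabited cm_carrier
}.

Definition two_sided_translate (G : PolishGroup) (g : G) (B : G -> Prop) (h : G)
  : G -> Prop :=
  fun x => exists b, B b /\ x = pg_mul G (pg_mul G g b) h.

Definition haar_meager (G : PolishGroup) (A : G -> Prop) : Prop :=
  exists B : G -> Prop,
    borel (pg_dist G) B /\ (forall x, A x -> B x) /\
    exists (K : CompactMetricSpace) (f : K -> G),
      m_continuous (cm_dist K) (pg_dist G) f /\
      forall g h : G,
        meager (cm_dist K) (fun k => two_sided_translate G g B h (f k)).

(* Subsets are immediate: the witnessing Borel set can be kept.  For a
   countable union, let [f n : K n -> G] witness [B n].  Recentring [f n] at a
   point and restricting it to a small closed ball gives maps [g n] whose
   infinite product [F k = g 0 (k 0) * g 1 (k 1) * ...] converges uniformly on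
   the compact product of the balls.  Varying only the coordinate [k j] moves [F k] along a
   two-sided translate of [g j], so every section of the Borel set
   [F^-1 (g B_j h)] in direction [j] is meager, and the Kuratowski-Ulam theorem
   makes the set itself meager. *)

From Pilot Require Import Defs.
From Stdlib Require Import Reals List Lra Lia Cantor Eqdep_dec.
From Stdlib Require Import FunctionalExtensionality ProofIrrelevance
  IndefiniteDescription ChoiceFacts Classical.
(* Re-import so that [compact] refers to Defs, not to Rtopology. *)
Import Defs.
Open Scope R_scope.

Lemma dependent_functional_choice {A : Type} {B : A -> Type} :
  DependentFunctionalChoice_on B.
Proof. exact (non_dep_dep_functional_choice functional_choice B). Qed.

Definition half_pow (n : nat) : R := (/ 2) ^ n.

Lemma half_pow_pos n : 0 < half_pow n.
Proof. apply pow_lt. lra. Qed.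

Lemma half_pow_S n : half_pow (S n) = half_pow n / 2.
Proof. unfold half_pow. simpl. lra. Qed.

Lemma half_pow_le n m : (n <= m)%nat -> half_pow m <= half_pow n.
Proof. induction 1; [lra|]. rewrite half_pow_S. pose proof (half_pow_pos m). lra. Qed.

Lemma half_pow_small eps : 0 < eps -> exists N, half_pow N < eps.
Proof.
  intros Heps.
  destruct (pow_lt_1_zero (/ 2) ltac:(rewrite Rabs_pos_eq; lra) eps Heps) as [N HN].
  exists N. specialize (HN N (le_n N)). rewrite Rabs_pos_eq in HN; [exact HN|].
  left. apply pow_lt. lra.
Qed.

Section Metric.
Context {X : Type} (d : X -> X -> R) (Hd : is_metric d).

Lemma dist_ge0 x y : 0 <= d x y.
Proof. apply Hd. Qed.
Lemma dist_refl x : d x x = 0.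
Proof. apply Hd. reflexivity. Qed.
Lemma dist_eq x y : d x y = 0 -> x = y.
Proof. apply Hd. Qed.
Lemma dist_sym x y : d x y = d y x.
Proof. apply Hd. Qed.
Lemma dist_triangle x y z : d x z <= d x y + d y z.
Proof. apply Hd. Qed.

Lemma ball_open x r : m_open d (ball d x r).
Proof.
  intros y Hy. unfold ball in *. exists (r - d x y). split; [lra|].
  intros z Hz. unfold ball in Hz. pose proof (dist_triangle x y z). lra.
Qed.

Lemma ball_center x r : 0 < r -> ball d x r x.
Proof. unfold ball. rewrite dist_refl. auto. Qed.

Lemma subset_closure (A : X -> Prop) x : A x -> m_closure d A x.
Proof. intros H r Hr. exists x. rewrite dist_refl. auto. Qed.

Lemma closure_idem (A : X -> Prop) x : m_closure d (m_closure d A) x -> m_closure d A x.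
Proof.
  intros H r Hr. destruct (H (r/2) ltac:(lra)) as [a [Ha Hxa]].
  destruct (Ha (r/2) ltac:(lra)) as [b [Hb Hab]]. exists b. split; [exact Hb|].
  pose proof (dist_triangle x a b). lra.
Qed.

Lemma not_closure_dist (A : X -> Prop) x :
  ~ m_closure d A x -> exists s, 0 < s /\ forall a, A a -> s <= d x a.
Proof.
  intros Hx. apply NNPP. intro Hno. apply Hx. intros r Hr. apply NNPP. intro Hfar.
  apply Hno. exists r. split; [exact Hr|]. intros a Ha. apply Rnot_lt_le. eauto.
Qed.

Lemma nowhere_dense_meager A : nowhere_dense d A -> meager d A.
Proof. intros H. exists (fun _ => A). split; [auto|]. intros x Hx. exists O. exact Hx. Qed.

Lemma meager_sub (A B : X -> Prop) :
  (forall x, A x -> B x) -> meager d B -> meager d A.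
Proof. intros HAB [N [HN HBN]]. exists N. auto. Qed.

Lemma meager_empty : meager d (fun _ => False).
Proof.
  apply nowhere_dense_meager. intros [x [r [Hr H]]].
  destruct (H x (ball_center x r Hr) r Hr) as [a [[] _]].
Qed.

Lemma meager_bigcup (A : nat -> X -> Prop) :
  (forall n, meager d (A n)) -> meager d (fun x => exists n, A n x).
Proof.
  intros H. apply functional_choice in H. destruct H as [N HN].
  exists (fun m => N (fst (Cantor.of_nat m)) (snd (Cantor.of_nat m))). split.
  - intros m. apply HN.
  - intros x [n Hn]. destruct (proj2 (HN n) x Hn) as [k Hk].
    exists (Cantor.to_nat (n, k)). rewrite Cantor.cancel_of_to. exact Hk.
Qed.

Lemma meager_union (A B : X -> Prop) :
  meager d A -> meager d B -> meager d (fun x => A x \/ B x).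
Proof.
  intros HA HB.
  apply (meager_sub _ (fun x => exists n : nat, if Nat.eqb n 0 then A x else B x)).
  - intros x [H|H]; [exists O | exists 1%nat]; exact H.
  - apply meager_bigcup. intros [|n]; assumption.
Qed.

Lemma limit_dist_le s l a c :
  converges_to d s l -> (exists N, forall m, (N <= m)%nat -> d a (s m) <= c) -> d a l <= c.
Proof.
  intros Hl [N HN]. apply Rnot_lt_le. intro Hc.
  destruct (Hl (d a l - c) ltac:(lra)) as [M HM].
  specialize (HM (max N M) ltac:(lia)). specialize (HN (max N M) ltac:(lia)).
  pose proof (dist_triangle a (s (max N M)) l). lra.
Qed.

Lemma limit_unique s l l' : converges_to d s l -> converges_to d s l' -> l = l'.
Proof.
  intros H1 H2. apply dist_eq. apply Rle_antisym; [|apply dist_ge0].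
  apply Rnot_lt_le. intro Hc.
  destruct (H1 (d l l' / 2) ltac:(lra)) as [M1 HM1].
  destruct (H2 (d l l' / 2) ltac:(lra)) as [M2 HM2].
  specialize (HM1 (max M1 M2) ltac:(lia)). specialize (HM2 (max M1 M2) ltac:(lia)).
  pose proof (dist_triangle l (s (max M1 M2)) l'). rewrite (dist_sym l (s _)) in H. lra.
Qed.

Section Geometric.
Variables (s : nat -> X) (c : R).
Hypothesis step_le : forall n, d (s n) (s (S n)) <= c * half_pow n.

Lemma geometric_dist_le n m :
  (n <= m)%nat -> d (s n) (s m) <= 2 * c * half_pow n - 2 * c * half_pow m.
Proof.
  induction 1.
  - rewrite dist_refl. lra.
  - pose proof (dist_triangle (s n) (s m) (s (S m))).
    specialize (step_le m). rewrite half_pow_S. lra.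
Qed.

Lemma geometric_cauchy : 0 <= c -> cauchy d s.
Proof.
  intros Hc eps Heps.
  destruct (half_pow_small (eps / (2 * c + 1))) as [N HN].
  { apply Rdiv_lt_0_compat; lra. }
  assert (Htail : forall k, (N <= k)%nat -> 2 * c * half_pow k < eps).
  { intros k Hk. pose proof (half_pow_le _ _ Hk). pose proof (half_pow_pos k).
    assert (half_pow N * (2 * c + 1) < eps).
    { apply Rmult_lt_compat_r with (r := 2 * c + 1) in HN; [|lra].
      unfold Rdiv in HN. rewrite Rmult_assoc, Rinv_l, Rmult_1_r in HN; lra. }
    nra. }
  exists N. intros m n Hm Hn.
  assert (0 <= c * half_pow m) by (apply Rmult_le_pos; [lra | left; apply half_pow_pos]).
  assert (0 <= c * half_pow n) by (apply Rmult_le_pos; [lra | left; apply half_pow_pos]).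
  destruct (Nat.le_ge_cases m n) as [Hmn|Hmn].
  - pose proof (geometric_dist_le m n Hmn). pose proof (Htail m Hm). lra.
  - pose proof (geometric_dist_le n m Hmn). pose proof (Htail n Hn).
    rewrite dist_sym. lra.
Qed.

End Geometric.
End Metric.

Section Complete.
Context {X : Type} (d : X -> X -> R) (Hd : is_metric d).

Lemma nested_balls_point (c : nat -> X) (r : nat -> R) :
  complete d ->
  (forall n m, (n <= m)%nat -> d (c n) (c m) < r n) ->
  (forall eps, 0 < eps -> exists N, forall n, (N <= n)%nat -> r n < eps) ->
  exists z, forall n, d (c n) z <= r n.
Proof.
  intros Hc Hnest Hr.
  assert (Hcauchy : cauchy d c).
  { intros eps Heps. destruct (Hr eps Heps) as [N HN]. exists N. intros m n Hm Hn.
    destruct (Nat.le_ge_cases m n) as [Hmn|Hmn].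
    - pose proof (Hnest m n Hmn). pose proof (HN m Hm). lra.
    - pose proof (Hnest n m Hmn). pose proof (HN n Hn). rewrite (dist_sym d Hd). lra. }
  destruct (Hc c Hcauchy) as [z Hz]. exists z. intros n.
  apply (limit_dist_le d Hd c); [exact Hz|]. exists n. intros m Hm. left. auto.
Qed.

Lemma nowhere_dense_avoid_ball (A : X -> Prop) y rho :
  nowhere_dense d A -> 0 < rho ->
  exists z s, 0 < s /\ s <= rho / 2 /\
    forall w, d z w < 2 * s -> d y w < rho /\ ~ A w.
Proof.
  intros HA Hrho.
  assert (Hex : exists z, d y z < rho /\ ~ m_closure d A z).
  { apply NNPP. intro Hno. apply HA. exists y, rho. split; [exact Hrho|].
    intros z Hz. apply NNPP. intro Hz'. apply Hno. eauto. }
  destruct Hex as [z [Hyz Hz]].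
  destruct (not_closure_dist d A z Hz) as [s [Hs Hsa]].
  set (t := Rmin (rho/2) (Rmin (s/2) ((rho - d y z)/2))).
  assert (Ht1 := Rmin_l (rho/2) (Rmin (s/2) ((rho - d y z)/2))).
  assert (Ht2 := Rmin_r (rho/2) (Rmin (s/2) ((rho - d y z)/2))).
  assert (Ht3 := Rmin_l (s/2) ((rho - d y z)/2)).
  assert (Ht4 := Rmin_r (s/2) ((rho - d y z)/2)).
  assert (Ht : 0 < t) by (apply Rmin_pos; [lra | apply Rmin_pos; lra]).
  fold t in Ht1, Ht2.
  exists z, t. split; [exact Ht|]. split; [exact Ht1|]. intros w Hw. split.
  - pose proof (dist_triangle d Hd y z w). lra.
  - intro HAw. specialize (Hsa w HAw). lra.
Qed.

Theorem baire_category : complete d ->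
  forall N : nat -> X -> Prop, (forall n, nowhere_dense d (N n)) ->
  forall x0 r0, 0 < r0 -> exists z, d x0 z < r0 /\ forall n, ~ N n z.
Proof.
  intros Hc N HN x0 r0 Hr0.
  assert (Hstep : forall q : nat * (X * R), exists p : X * R, 0 < snd (snd q) ->
     0 < snd p /\ snd p <= snd (snd q) / 2 /\
     forall w, d (fst p) w < 2 * snd p -> d (fst (snd q)) w < snd (snd q) /\ ~ N (fst q) w).
  { intros [n [y rho]]. destruct (Rlt_dec 0 rho) as [Hrho|Hrho].
    - destruct (nowhere_dense_avoid_ball (N n) y rho (HN n) Hrho) as [z [s Hzs]].
      exists (z, s). auto.
    - exists (y, rho). simpl. intros. contradiction. }
  apply functional_choice in Hstep. destruct Hstep as [next Hnext].
  set (ps := fix ps j := match j with O => (x0, r0 / 2) | S j => next (j, ps j) end).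
  assert (Hpos : forall j, 0 < snd (ps j) /\ snd (ps j) <= r0 / 2 * half_pow j).
  { induction j as [|j [H1 H2]].
    - simpl. unfold half_pow. simpl. lra.
    - destruct (Hnext (j, ps j) H1) as [H3 [H4 _]]. cbn [fst snd] in H4.
      change (ps (S j)) with (next (j, ps j)). rewrite half_pow_S. split; lra. }
  assert (Hin : forall n w, d (fst (ps (S n))) w < 2 * snd (ps (S n)) ->
                  d (fst (ps n)) w < snd (ps n) /\ ~ N n w).
  { intros n. exact (proj2 (proj2 (Hnext (n, ps n) (proj1 (Hpos n))))). }
  assert (Hnest : forall n m, (n <= m)%nat ->
            forall w, d (fst (ps m)) w < snd (ps m) -> d (fst (ps n)) w < snd (ps n)).
  { induction 1; intros w Hw; [exact Hw|].
    apply IHle, Hin. pose proof (proj1 (Hpos (S m))). lra. }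
  destruct (nested_balls_point (fun j => fst (ps j)) (fun j => snd (ps j)) Hc)
    as [z Hz].
  - intros n m Hnm. apply (Hnest n m Hnm). rewrite (dist_refl d Hd). apply Hpos.
  - intros eps Heps. destruct (half_pow_small (eps / r0)) as [K HK].
    { apply Rdiv_lt_0_compat; lra. }
    exists K. intros n Hn. pose proof (half_pow_le _ _ Hn). destruct (Hpos n) as [_ Hn2].
    assert (half_pow K * r0 < eps).
    { apply Rmult_lt_compat_r with (r := r0) in HK; [|lra].
      unfold Rdiv in HK. rewrite Rmult_assoc, Rinv_l, Rmult_1_r in HK; lra. }
    pose proof (half_pow_pos n). nra.
  - exists z. split.
    + pose proof (Hz O). simpl in *. lra.
    + intros n. apply (Hin n z). pose proof (Hz (S n)). pose proof (proj1 (Hpos (S n))). lra.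
Qed.

Lemma meager_avoid_ball : complete d -> forall M, meager d M ->
  forall x0 r0, 0 < r0 -> exists z, d x0 z < r0 /\ ~ M z.
Proof.
  intros Hc M [N [HN HMN]] x0 r0 Hr0.
  destruct (baire_category Hc N HN x0 r0 Hr0) as [z [Hz HzN]].
  exists z. split; [exact Hz|]. intros HMz. destruct (HMN z HMz) as [n Hn]. exact (HzN n Hn).
Qed.

End Complete.

Definition totally_bounded {X : Type} (d : X -> X -> R) : Prop :=
  forall eps, 0 < eps -> exists l : list X, forall x, exists c, In c l /\ d x c < eps.

Section Compactness.
Context {X : Type} (d : X -> X -> R) (Hd : is_metric d).

Lemma compact_totally_bounded : compact d -> totally_bounded d.
Proof.
  intros Hc eps Heps.
  destruct (Hc X (fun c => ball d c eps)) as [l Hl].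
  - intros c. apply (ball_open d Hd).
  - intros x. exists x. apply (ball_center d Hd). exact Heps.
  - exists l. intros x. destruct (Hl x) as [c [Hc1 Hc2]]. exists c.
    unfold ball in Hc2. rewrite (dist_sym d Hd). auto.
Qed.

(* A Cauchy sequence without limit stays eventually away from every point;
   the resulting open cover has no finite subcover. *)
Lemma compact_complete : compact d -> complete d.
Proof.
  intros Hc s Hs. apply NNPP. intro Hno.
  assert (Hfar : forall x, exists r, 0 < r /\
            exists N, forall n, (N <= n)%nat -> r <= d (s n) x).
  { intros x. assert (Hx : ~ converges_to d s x) by eauto.
    apply not_all_ex_not in Hx. destruct Hx as [eps Hx].
    apply imply_to_and in Hx. destruct Hx as [Heps Hx].
    destruct (Hs (eps/2) ltac:(lra)) as [N0 HN0].
    exists (eps/2). split; [lra|]. exists N0. intros n Hn.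
    apply Rnot_lt_le. intro Hlt. apply Hx. exists N0. intros m Hm.
    apply Rnot_le_lt. intro Hle.
    specialize (HN0 m n Hm Hn). pose proof (dist_triangle d Hd (s m) (s n) x). lra. }
  set (far := fun p : X * R => 0 < snd p /\
                exists N, forall n, (N <= n)%nat -> snd p <= d (s n) (fst p)).
  destruct (Hc (X * R)%type (fun p y => d (fst p) y < snd p /\ far p)) as [l Hl].
  - intros [x r] y [H1 H2]. simpl in *. exists (r - d x y). split; [lra|].
    intros z Hz. unfold ball in Hz. split; [|exact H2].
    pose proof (dist_triangle d Hd x y z). lra.
  - intros y. destruct (Hfar y) as [r Hr]. exists (y, r). simpl.
    rewrite (dist_refl d Hd). split; [apply Hr | exact Hr].
  - assert (HM : exists M, forall p, In p l -> far p ->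
                   forall n, (M <= n)%nat -> snd p <= d (s n) (fst p)).
    { clear Hl. induction l as [|p l [M HM]].
      - exists O. intros p [].
      - destruct (classic (far p)) as [[_ [N HN]]|Hp].
        + exists (max M N). intros q [<-|Hq] Hfq n Hn; [apply HN | apply HM]; auto; lia.
        + exists M. intros q [<-|Hq] Hfq n Hn; [contradiction | apply HM]; auto. }
    destruct HM as [M HM]. destruct (Hl (s M)) as [p [Hp [H1 H2]]].
    specialize (HM p Hp H2 M (le_n M)). rewrite (dist_sym d Hd) in HM. lra.
Qed.

Definition not_finitely_covered {I : Type} (U : I -> X -> Prop) (S : X -> Prop) :=
  ~ exists l : list I, forall x, S x -> exists i, In i l /\ U i x.

Lemma not_finitely_covered_ball {I : Type} (U : I -> X -> Prop) S eps :
  totally_bounded d -> 0 < eps -> not_finitely_covered U S ->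
  exists c, not_finitely_covered U (fun x => S x /\ d c x < eps).
Proof.
  intros Htb Heps HS. apply NNPP. intro Hn.
  assert (Hall : forall c, exists l, forall x, S x /\ d c x < eps -> exists i, In i l /\ U i x).
  { intros c. apply NNPP. intro Hc. apply Hn. exists c. exact Hc. }
  destruct (Htb eps Heps) as [L HL]. apply HS.
  assert (Hcover : forall L : list X, exists l, forall x,
            (exists c, In c L /\ S x /\ d c x < eps) -> exists i, In i l /\ U i x).
  { induction L0 as [|c L0 [l1 Hl1]].
    - exists nil. intros x [c [[] _]].
    - destruct (Hall c) as [l2 Hl2]. exists (l2 ++ l1). intros x [c' [[<-|Hc'] Hx]].
      + destruct (Hl2 x Hx) as [i [Hi Hi']]. exists i. split; [apply in_or_app|]; auto.
      + destruct (Hl1 x) as [i [Hi Hi']]; eauto.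
        exists i. split; [apply in_or_app|]; auto. }
  destruct (Hcover L) as [l Hl]. exists l. intros x Hx. apply Hl.
  destruct (HL x) as [c [Hc1 Hc2]]. exists c. rewrite (dist_sym d Hd). auto.
Qed.

(* If a cover had no finite subcover, halving balls that are not finitely
   covered would give a Cauchy sequence whose limit lies in one member of the
   cover together with a whole ball of the sequence. *)
Lemma complete_totally_bounded_compact : complete d -> totally_bounded d -> compact d.
Proof.
  intros Hc Htb I U HU Hcov. apply NNPP. intro Hno.
  set (bad := fun c j => not_finitely_covered U (ball d c (half_pow j))).
  assert (Hne : forall S, not_finitely_covered U S -> exists x, S x).
  { intros S HS. apply NNPP. intro Hn. apply HS. exists nil. intros x Hx. exfalso. eauto. }
  assert (Hstep : forall p : nat * X, exists c', bad (snd p) (fst p) ->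
             bad c' (S (fst p)) /\ d (snd p) c' <= 2 * half_pow (fst p)).
  { intros [j c]. simpl. destruct (classic (bad c j)) as [Hb|Hb]; [|exists c; tauto].
    destruct (not_finitely_covered_ball U _ _ Htb (half_pow_pos (S j)) Hb) as [c' Hc'].
    exists c'. intros _. split.
    - intros [l Hl]. apply Hc'. exists l. intros x [_ Hx]. exact (Hl x Hx).
    - destruct (Hne _ Hc') as [x [Hx1 Hx2]]. unfold ball in Hx1.
      pose proof (dist_triangle d Hd c x c'). rewrite (dist_sym d Hd x c') in H.
      rewrite half_pow_S in Hx2. pose proof (half_pow_pos j). lra. }
  apply functional_choice in Hstep. destruct Hstep as [next Hnext].
  destruct (not_finitely_covered_ball U (fun _ => True) _ Htb (half_pow_pos 0)) as [c0 Hc0].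
  { intros [l Hl]. apply Hno. exists l. intros x. apply Hl. exact Logic.I. }
  set (cs := fix cs j := match j with O => c0 | S j => next (j, cs j) end).
  assert (Hbad : forall j, bad (cs j) j).
  { induction j.
    - intros [l Hl]. apply Hc0. exists l. intros x [_ Hx]. exact (Hl x Hx).
    - exact (proj1 (Hnext (j, cs j) IHj)). }
  assert (Hst : forall j, d (cs j) (cs (S j)) <= 2 * half_pow j).
  { intros j. exact (proj2 (Hnext (j, cs j) (Hbad j))). }
  destruct (Hc cs (geometric_cauchy d Hd cs 2 Hst ltac:(lra))) as [lim Hlim].
  destruct (Hcov lim) as [i Hi]. destruct (HU i lim Hi) as [rho [Hrho Hball]].
  destruct (half_pow_small (rho/9) ltac:(lra)) as [j Hj].
  assert (Hdl : d (cs j) lim <= 4 * half_pow j).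
  { apply (limit_dist_le d Hd cs); [exact Hlim|]. exists j. intros m Hm.
    pose proof (geometric_dist_le d Hd cs 2 Hst j m Hm). pose proof (half_pow_pos m). lra. }
  apply (Hbad j). exists (i :: nil). intros x Hx. exists i. split; [left; reflexivity|].
  apply Hball. unfold ball in *. pose proof (dist_triangle d Hd lim (cs j) x).
  rewrite (dist_sym d Hd lim (cs j)) in H. pose proof (half_pow_pos j). lra.
Qed.

End Compactness.

Lemma cms_complete (K : CompactMetricSpace) : complete (cm_dist K).
Proof. apply compact_complete; [apply cm_metric | apply cm_compact]. Qed.

Lemma cms_totally_bounded (K : CompactMetricSpace) : totally_bounded (cm_dist K).
Proof. apply compact_totally_bounded; [apply cm_metric | apply cm_compact]. Qed.

Definition mkCMS (X : Type) (d : X -> X -> R) (Hd : is_metric d) (Hc : complete d)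
  (Htb : totally_bounded d) (x0 : X) : CompactMetricSpace :=
  {| cm_carrier := X; cm_dist := d; cm_metric := Hd;
     cm_compact := complete_totally_bounded_compact d Hd Hc Htb;
     cm_nonempty := inhabits x0 |}.

Section BaireProperty.
Context {X : Type} (d : X -> X -> R) (Hd : is_metric d).

Definition baire_property (E : X -> Prop) : Prop :=
  exists U M, m_open d U /\ meager d M /\ forall x, ~ M x -> (E x <-> U x).

Lemma baire_property_open U : m_open d U -> baire_property U.
Proof.
  intros HU. exists U, (fun _ => False). split; [exact HU|].
  split; [exact (meager_empty d Hd) | tauto].
Qed.

Lemma baire_property_ext A B :
  baire_property A -> (forall x, A x <-> B x) -> baire_property B.
Proof.
  intros [U [M [HU [HM HA]]]] HAB. exists U, M. split; [exact HU|]. split; [exact HM|].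
  intros x Hx. rewrite <- HAB. auto.
Qed.

Lemma baire_property_bigcup (A : nat -> X -> Prop) :
  (forall n, baire_property (A n)) -> baire_property (fun x => exists n, A n x).
Proof.
  intros H. apply functional_choice in H. destruct H as [U HU].
  apply functional_choice in HU. destruct HU as [M HM].
  exists (fun x => exists n, U n x), (fun x => exists n, M n x). split; [|split].
  - intros x [n Hn]. destruct (proj1 (HM n) x Hn) as [r [Hr Hb]].
    exists r. split; [exact Hr|]. intros y Hy. exists n. auto.
  - apply (meager_bigcup d). intros n. apply HM.
  - intros x Hx. split; intros [n Hn]; exists n; apply (proj2 (proj2 (HM n)));
      auto; intro; apply Hx; eauto.
Qed.

Lemma boundary_nowhere_dense U :
  m_open d U -> nowhere_dense d (fun x => m_closure d U x /\ ~ U x).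
Proof.
  intros HU [x [r [Hr H]]].
  assert (Hx : m_closure d U x).
  { apply (closure_idem d Hd). intros s Hs.
    destruct (H x (ball_center d Hd x r Hr) s Hs) as [a [[Ha _] Hxa]]. eauto. }
  destruct (Hx (r/2) ltac:(lra)) as [u [Hu Hxu]].
  destruct (HU u Hu) as [s [Hs Hsb]].
  destruct (H u ltac:(unfold ball; lra) (Rmin s (r/2)) ltac:(apply Rmin_pos; lra))
    as [a [[_ Ha] Hua]].
  apply Ha, Hsb. unfold ball. pose proof (Rmin_l s (r/2)). lra.
Qed.

(* Up to [M] and the boundary of [U], the complement of [A] is the exterior
   of [U]. *)
Lemma baire_property_compl A : baire_property A -> baire_property (fun x => ~ A x).
Proof.
  intros [U [M [HU [HM HA]]]].
  exists (fun x => ~ m_closure d U x), (fun x => M x \/ (m_closure d U x /\ ~ U x)).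
  split; [|split].
  - intros x Hx. destruct (not_closure_dist d U x Hx) as [s [Hs Hsa]].
    exists (s/2). split; [lra|]. intros y Hy Hcy.
    destruct (Hcy (s/2) ltac:(lra)) as [a [Ha Hya]]. specialize (Hsa a Ha).
    unfold ball in Hy. pose proof (dist_triangle d Hd x y a). lra.
  - apply (meager_union d); [exact HM|].
    apply (nowhere_dense_meager d), boundary_nowhere_dense, HU.
  - intros x Hx. split.
    + intros HnA Hcl. apply Hx. right. split; [exact Hcl|]. intro HUx. apply HnA, HA; auto.
    + intros Hncl HAx. apply Hncl, (subset_closure d Hd), HA; auto.
Qed.

End BaireProperty.

Lemma open_preimage {X Y : Type} (dX : X -> X -> R) (dY : Y -> Y -> R) (f : X -> Y) U :
  m_continuous dX dY f -> m_open dY U -> m_open dX (fun x => U (f x)).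
Proof.
  intros Hf HU x Hx. destruct (HU _ Hx) as [r [Hr H]].
  destruct (Hf x r Hr) as [delta [Hdelta H2]].
  exists delta. split; [exact Hdelta|]. intros y Hy. apply H, H2, Hy.
Qed.

Lemma borel_preimage_baire_property {X Y : Type} (dX : X -> X -> R) (dY : Y -> Y -> R)
  (f : X -> Y) B :
  is_metric dX -> m_continuous dX dY f -> borel dY B -> baire_property dX (fun x => B (f x)).
Proof.
  intros HdX Hf HB. induction HB.
  - apply (baire_property_open dX HdX), (open_preimage dX dY); assumption.
  - apply (baire_property_compl dX HdX). assumption.
  - apply (baire_property_bigcup dX (fun n x => A n (f x))). assumption.
  - apply (baire_property_ext dX (fun x => A (f x))); auto.
Qed.

Section Product.
Context (T : nat -> Type) (dT : forall n, T n -> T n -> R)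
  (HdT : forall n, is_metric (dT n)).

Definition prod_space := forall n, T n.

Definition prod_term (k k' : prod_space) n := Rmin (half_pow n) (dT n (k n) (k' n)).

Lemma prod_term_bounds k k' n : 0 <= prod_term k k' n <= half_pow n.
Proof.
  unfold prod_term. pose proof (dist_ge0 _ (HdT n) (k n) (k' n)).
  pose proof (half_pow_pos n). unfold Rmin; destruct Rle_dec; lra.
Qed.

Lemma prod_terms_bound k k' : bound (fun r => exists n, r = prod_term k k' n).
Proof.
  exists 1. intros r [n ->]. pose proof (Rmin_l (half_pow n) (dT n (k n) (k' n))).
  pose proof (half_pow_le 0 n ltac:(lia)). unfold prod_term, half_pow in *. simpl in *. lra.
Qed.

Lemma prod_terms_inhabited k k' : exists r, exists n, r = prod_term k k' n.
Proof. exists (prod_term k k' 0). exists 0%nat. reflexivity. Qed.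

Definition prod_dist (k k' : prod_space) : R :=
  proj1_sig (completeness _ (prod_terms_bound k k') (prod_terms_inhabited k k')).

Lemma prod_dist_ge k k' n : prod_term k k' n <= prod_dist k k'.
Proof.
  unfold prod_dist.
  apply (proj1 (proj2_sig (completeness _ (prod_terms_bound k k') (prod_terms_inhabited k k')))).
  eauto.
Qed.

Lemma prod_dist_le k k' c : (forall n, prod_term k k' n <= c) -> prod_dist k k' <= c.
Proof.
  intros H. unfold prod_dist.
  apply (proj2 (proj2_sig (completeness _ (prod_terms_bound k k') (prod_terms_inhabited k k')))).
  intros r [n ->]. auto.
Qed.

Lemma prod_dist_metric : is_metric prod_dist.
Proof.
  split; [|split; [|split]].
  - intros x y. pose proof (prod_dist_ge x y 0). pose proof (prod_term_bounds x y 0). lra.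
  - intros x y. split.
    + intros H. apply functional_extensionality_dep. intros n.
      apply (dist_eq _ (HdT n)). pose proof (prod_dist_ge x y n).
      unfold prod_term in *. pose proof (half_pow_pos n).
      pose proof (dist_ge0 _ (HdT n) (x n) (y n)).
      revert H0. unfold Rmin; destruct Rle_dec; lra.
    + intros ->. apply Rle_antisym.
      * apply prod_dist_le. intros n. unfold prod_term. rewrite (dist_refl _ (HdT n)).
        pose proof (half_pow_pos n). unfold Rmin; destruct Rle_dec; lra.
      * pose proof (prod_dist_ge y y 0). pose proof (prod_term_bounds y y 0). lra.
  - intros x y. apply Rle_antisym; apply prod_dist_le; intros n; unfold prod_term;
      rewrite (dist_sym _ (HdT n)); apply prod_dist_ge.
  - intros x y z. apply prod_dist_le. intros n.
    pose proof (prod_dist_ge x y n). pose proof (prod_dist_ge y z n).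
    unfold prod_term in *. pose proof (dist_triangle _ (HdT n) (x n) (y n) (z n)).
    pose proof (dist_ge0 _ (HdT n) (x n) (y n)). pose proof (dist_ge0 _ (HdT n) (y n) (z n)).
    pose proof (half_pow_pos n). revert H H0. unfold Rmin; repeat destruct Rle_dec; lra.
Qed.

Lemma prod_dist_coord k k' n :
  prod_dist k k' < half_pow n -> dT n (k n) (k' n) <= prod_dist k k'.
Proof.
  intros H. pose proof (prod_dist_ge k k' n). unfold prod_term in H0.
  revert H0. unfold Rmin; destruct Rle_dec; lra.
Qed.

Lemma prod_dist_cylinder k k' N eps :
  (forall n, (n <= N)%nat -> dT n (k n) (k' n) <= eps) -> half_pow (S N) <= eps ->
  prod_dist k k' <= eps.
Proof.
  intros H1 H2. apply prod_dist_le. intros n. unfold prod_term.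
  destruct (Compare_dec.le_lt_dec n N) as [Hn|Hn].
  - specialize (H1 n Hn). pose proof (half_pow_pos n). unfold Rmin; destruct Rle_dec; lra.
  - pose proof (half_pow_le (S N) n Hn). pose proof (Rmin_l (half_pow n) (dT n (k n) (k' n))). lra.
Qed.

Lemma coord_continuous n : m_continuous prod_dist (dT n) (fun k => k n).
Proof.
  intros k eps Heps. exists (Rmin eps (half_pow n)). split.
  - apply Rmin_pos; [exact Heps | apply half_pow_pos].
  - intros k' Hk'. pose proof (Rmin_l eps (half_pow n)). pose proof (Rmin_r eps (half_pow n)).
    pose proof (prod_dist_coord k k' n ltac:(lra)). lra.
Qed.

Definition update (k : prod_space) (j : nat) (x : T j) : prod_space :=
  fun n => match Nat.eq_dec j n with left e => eq_rect j T x n e | right _ => k n end.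

Lemma update_eq k j x : update k j x j = x.
Proof.
  unfold update. destruct (Nat.eq_dec j j) as [e|e]; [|contradiction].
  rewrite (UIP_dec Nat.eq_dec e eq_refl). reflexivity.
Qed.

Lemma update_neq k j x n : j <> n -> update k j x n = k n.
Proof. intros H. unfold update. destruct (Nat.eq_dec j n); [contradiction | reflexivity]. Qed.

Lemma update_id k j : update k j (k j) = k.
Proof.
  apply functional_extensionality_dep. intros n. unfold update.
  destruct (Nat.eq_dec j n); [subst|]; reflexivity.
Qed.

Lemma update_update k j x y : update (update k j x) j y = update k j y.
Proof.
  apply functional_extensionality_dep. intros n. unfold update.
  destruct (Nat.eq_dec j n); reflexivity.
Qed.

Lemma prod_dist_update_same k k' j x : prod_dist (update k j x) (update k' j x) <= prod_dist k k'.
Proof.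
  apply prod_dist_le. intros n. unfold prod_term. destruct (Nat.eq_dec j n) as [<-|Hn].
  - rewrite !update_eq, (dist_refl _ (HdT j)). pose proof (prod_dist_ge k k' j).
    pose proof (prod_term_bounds k k' j). pose proof (half_pow_pos j).
    unfold Rmin; destruct Rle_dec; lra.
  - rewrite !update_neq by exact Hn. apply prod_dist_ge.
Qed.

Lemma prod_dist_update k j x y : prod_dist (update k j x) (update k j y) <= dT j x y.
Proof.
  apply prod_dist_le. intros n. unfold prod_term. destruct (Nat.eq_dec j n) as [<-|Hn].
  - rewrite !update_eq. apply Rmin_r.
  - rewrite !update_neq by exact Hn. rewrite (dist_refl _ (HdT n)).
    pose proof (half_pow_pos n). pose proof (dist_ge0 _ (HdT j) x y).
    unfold Rmin; destruct Rle_dec; lra.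
Qed.

Lemma eventually_uniform (Q : nat -> nat -> Prop) :
  (forall n, exists M, forall m, (M <= m)%nat -> Q n m) ->
  forall N, exists M, forall n m, (n <= N)%nat -> (M <= m)%nat -> Q n m.
Proof.
  intros H N. induction N as [|N [M1 HM1]].
  - destruct (H 0%nat) as [M HM]. exists M. intros n m Hn Hm.
    replace n with 0%nat by lia. auto.
  - destruct (H (S N)) as [M2 HM2]. exists (max M1 M2). intros n m Hn Hm.
    destruct (Nat.eq_dec n (S N)) as [->|Hne]; [apply HM2 | apply HM1]; lia.
Qed.

Lemma prod_complete : (forall n, complete (dT n)) -> complete prod_dist.
Proof.
  intros Hc s Hs.
  assert (Hl : forall n, exists l : T n, converges_to (dT n) (fun m => s m n) l).
  { intros n. apply Hc. intros eps Heps.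
    destruct (Hs (Rmin eps (half_pow n)) (Rmin_pos _ _ Heps (half_pow_pos n))) as [N HN].
    exists N. intros a b Ha Hb. specialize (HN a b Ha Hb).
    pose proof (Rmin_l eps (half_pow n)). pose proof (Rmin_r eps (half_pow n)).
    pose proof (prod_dist_coord (s a) (s b) n ltac:(lra)). lra. }
  apply dependent_functional_choice in Hl. destruct Hl as [l Hl]. exists l.
  intros eps Heps. destruct (half_pow_small (eps/2) ltac:(lra)) as [N HN].
  destruct (eventually_uniform (fun n m => dT n (s m n) (l n) < eps/2)
              (fun n => Hl n (eps/2) ltac:(lra)) N) as [M HM].
  exists M. intros m Hm. assert (prod_dist (s m) l <= eps/2); [|lra].
  apply prod_dist_cylinder with N.
  - intros n Hn. left. apply HM; assumption.
  - pose proof (half_pow_le N (S N) ltac:(lia)). lra.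
Qed.

Lemma prod_totally_bounded (k0 : prod_space) :
  (forall n, totally_bounded (dT n)) -> totally_bounded prod_dist.
Proof.
  intros Htb eps Heps. destruct (half_pow_small (eps/2) ltac:(lra)) as [N HN].
  assert (Hnet : forall N', exists l : list prod_space, forall k, exists p, In p l /\
            forall n, (n < N')%nat -> dT n (k n) (p n) < eps/2).
  { induction N' as [|N' [l Hl]].
    - exists (k0 :: nil). intros k. exists k0. split; [left; reflexivity | intros n Hn; lia].
    - destruct (Htb N' (eps/2) ltac:(lra)) as [L HL].
      exists (flat_map (fun p => map (fun c => update p N' c) L) l). intros k.
      destruct (Hl k) as [p [Hp Hpk]]. destruct (HL (k N')) as [c [Hc Hkc]].
      exists (update p N' c). split.
      + apply in_flat_map. exists p. split; [exact Hp | apply in_map, Hc].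
      + intros n Hn. destruct (Nat.eq_dec N' n) as [<-|Hne].
        * rewrite update_eq. exact Hkc.
        * rewrite update_neq by exact Hne. apply Hpk. lia. }
  destruct (Hnet (S N)) as [l Hl]. exists l. intros k. destruct (Hl k) as [p [Hp Hkp]].
  exists p. split; [exact Hp|]. assert (prod_dist k p <= eps/2); [|lra].
  apply prod_dist_cylinder with N.
  - intros n Hn. left. apply Hkp. lia.
  - pose proof (half_pow_le N (S N) ltac:(lia)). lra.
Qed.

End Product.

Arguments update {T} k j x n.

Section KuratowskiUlam.
Context (T : nat -> Type) (dT : forall n, T n -> T n -> R)
  (HdT : forall n, is_metric (dT n)) (j : nat).
Let d := prod_dist T dT.
Let Hd : is_metric d := prod_dist_metric T dT HdT.

Definition thick_section (F : prod_space T -> Prop) (c : T j) (rho : R) k : Prop :=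
  forall x, ball (dT j) c rho x -> m_closure d F (update k j x).

Lemma thick_section_closed F c rho k :
  m_closure d (thick_section F c rho) k -> thick_section F c rho k.
Proof.
  intros Hk x Hx. apply (closure_idem d Hd). intros eps Heps.
  destruct (Hk eps Heps) as [k' [Hk' Hkk']]. exists (update k' j x). split; [apply Hk', Hx|].
  pose proof (prod_dist_update_same T dT HdT k k' j x). fold d in H. lra.
Qed.

Lemma thick_section_nowhere_dense F c rho :
  0 < rho -> nowhere_dense d F -> nowhere_dense d (thick_section F c rho).
Proof.
  intros Hrho HF [k1 [s [Hs Hb]]]. apply HF.
  set (k2 := update k1 j c). set (t := Rmin s (Rmin (half_pow j) rho)).
  assert (Ht1 := Rmin_l s (Rmin (half_pow j) rho)).
  assert (Ht2 := Rmin_r s (Rmin (half_pow j) rho)).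
  assert (Ht3 := Rmin_l (half_pow j) rho). assert (Ht4 := Rmin_r (half_pow j) rho).
  fold t in Ht1, Ht2.
  assert (Ht : 0 < t)
    by (apply Rmin_pos; [exact Hs | apply Rmin_pos; [apply half_pow_pos | exact Hrho]]).
  exists k2, t. split; [exact Ht|].
  intros k Hk. unfold ball in Hk.
  assert (Hthick : thick_section F c rho (update k j (k1 j))).
  { apply thick_section_closed, Hb. unfold ball.
    assert (Hk1 : k1 = update k2 j (k1 j))
      by (unfold k2; rewrite update_update, update_id; reflexivity).
    rewrite Hk1 at 1. pose proof (prod_dist_update_same T dT HdT k2 k j (k1 j)). fold d in H. lra. }
  specialize (Hthick (k j)). rewrite update_update, update_id in Hthick. apply Hthick.
  pose proof (prod_dist_coord T dT k2 k j ltac:(fold d; lra)) as Hj.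
  unfold k2 in Hj at 1. rewrite update_eq in Hj. unfold ball. fold d in Hj. lra.
Qed.

Lemma closure_section_closed F k x :
  m_closure (dT j) (fun y => m_closure d F (update k j y)) x -> m_closure d F (update k j x).
Proof.
  intros Hx. apply (closure_idem d Hd). intros eps Heps.
  destruct (Hx eps Heps) as [y [Hy Hxy]]. exists (update k j y). split; [exact Hy|].
  pose proof (prod_dist_update T dT HdT k j x y). fold d in H. lra.
Qed.

(* Baire category in the product, applied to the countably many thick sections
   over the balls of a net of [T j], gives a point all of whose sections
   through [j] are thin. *)
Lemma meager_generic_section : (forall n, complete (dT n)) -> totally_bounded (dT j) ->
  forall M, meager d M -> forall k0 rho, 0 < rho ->
  exists ks, d k0 ks < rho /\ meager (dT j) (fun x => M (update ks j x)).
Proof.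
  intros Hc Htbj M [N [HN HMN]] k0 rho Hrho.
  assert (Hnet : forall q : nat, exists L : list (T j),
            forall x, exists c, In c L /\ dT j x c < half_pow q).
  { intros q. apply Htbj, half_pow_pos. }
  apply functional_choice in Hnet. destruct Hnet as [L HL].
  set (C := fun i q m => thick_section (N i) (nth m (L q) (k0 j)) (half_pow q)).
  set (C' := fun n => C (fst (Cantor.of_nat n)) (fst (Cantor.of_nat (snd (Cantor.of_nat n))))
                        (snd (Cantor.of_nat (snd (Cantor.of_nat n))))).
  destruct (baire_category d Hd (prod_complete T dT Hc) C') with (x0 := k0) (r0 := rho)
    as [ks [Hks Hgood]]; [|exact Hrho|].
  { intros n. apply thick_section_nowhere_dense; [apply half_pow_pos | apply HN]. }
  exists ks. split; [exact Hks|].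
  apply (meager_sub _ _ (fun x => exists i, m_closure d (N i) (update ks j x))).
  { intros x Hx. destruct (HMN _ Hx) as [i Hi]. exists i. apply (subset_closure d Hd), Hi. }
  apply (meager_bigcup (dT j)). intros i. apply (nowhere_dense_meager (dT j)).
  intros [x0 [s [Hs Hball]]].
  destruct (half_pow_small (s/2) ltac:(lra)) as [q Hq].
  destruct (HL q x0) as [c [Hc1 Hc2]]. destruct (In_nth _ _ (k0 j) Hc1) as [m [_ Hm]].
  apply (Hgood (Cantor.to_nat (i, Cantor.to_nat (q, m)))). unfold C', C.
  rewrite !Cantor.cancel_of_to. cbn [fst snd]. rewrite Cantor.cancel_of_to. cbn [fst snd].
  rewrite Hm. intros x Hx. apply closure_section_closed, Hball. unfold ball in *.
  pose proof (dist_triangle _ (HdT j) x0 c x). lra.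
Qed.

(* If [E] were not meager, its open part would contain a ball around some
   [k0]; a generic [ks] near [k0] has a meager section of the meager error set,
   while its section of the open part contains a ball of [T j]. *)
Theorem kuratowski_ulam (E : prod_space T -> Prop) :
  (forall n, complete (dT n)) -> totally_bounded (dT j) -> baire_property d E ->
  (forall k, meager (dT j) (fun x => E (update k j x))) -> meager d E.
Proof.
  intros Hc Htbj [U [M [HU [HM HE]]]] Hsec.
  destruct (classic (exists k0, U k0)) as [[k0 Hk0]|HnU].
  2:{ apply (meager_sub d E M); [|exact HM]. intros x Hx. apply NNPP. intros HnM.
      apply HnU. exists x. apply (HE x HnM), Hx. }
  exfalso. destruct (HU k0 Hk0) as [r [Hr Hball]].
  destruct (half_pow_small (r/2) ltac:(lra)) as [N HN].
  set (rho := Rmin (half_pow N) (r/2)).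
  assert (Hrho1 := Rmin_l (half_pow N) (r/2)). assert (Hrho2 := Rmin_r (half_pow N) (r/2)).
  fold rho in Hrho1, Hrho2.
  assert (Hrho : 0 < rho) by (apply Rmin_pos; [apply half_pow_pos | lra]).
  destruct (meager_generic_section Hc Htbj M HM k0 rho Hrho) as [ks [Hks HMs]].
  assert (HW : meager (dT j) (fun x => E (update ks j x) \/ M (update ks j x)))
    by (apply (meager_union (dT j)); auto).
  destruct (meager_avoid_ball (dT j) (HdT j) (Hc j) _ HW (k0 j) (r/2) ltac:(lra))
    as [x [Hx1 Hx2]].
  apply Hx2. destruct (classic (M (update ks j x))) as [HMx|HMx]; [right; exact HMx|].
  left. apply (HE _ HMx), Hball. unfold ball.
  assert (d k0 (update ks j x) <= r/2); [|lra].
  apply (prod_dist_cylinder T dT) with N; [|pose proof (half_pow_le N (S N) ltac:(lia)); lra].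
  intros n Hn. destruct (Nat.eq_dec j n) as [<-|Hne].
  - rewrite update_eq. lra.
  - rewrite update_neq by exact Hne. pose proof (half_pow_le n N Hn).
    pose proof (prod_dist_coord T dT k0 ks n ltac:(fold d; lra)). fold d in H0. lra.
Qed.

End KuratowskiUlam.

Section ClosedBall.
Context {X : Type} (d : X -> X -> R) (Hd : is_metric d) (a : X) (r : R).

Definition cball := {x : X | m_closure d (ball d a r) x}.

Definition cball_dist (u v : cball) : R := d (proj1_sig u) (proj1_sig v).

Lemma cball_metric : is_metric cball_dist.
Proof.
  unfold cball_dist. split; [|split; [|split]].
  - intros; apply (dist_ge0 d Hd).
  - intros [x Hx] [y Hy]. simpl. split.
    + intros H. apply (dist_eq d Hd) in H. subst. f_equal. apply proof_irrelevance.
    + intros H. inversion H. apply (dist_refl d Hd).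
  - intros; apply (dist_sym d Hd).
  - intros; apply (dist_triangle d Hd).
Qed.

Lemma cball_complete : complete d -> complete cball_dist.
Proof.
  intros Hc s Hs. destruct (Hc (fun n => proj1_sig (s n)) Hs) as [l Hl].
  assert (Hcl : m_closure d (ball d a r) l).
  { apply (closure_idem d Hd). intros eps Heps. destruct (Hl eps Heps) as [N HN].
    exists (proj1_sig (s N)). split; [apply proj2_sig|].
    rewrite (dist_sym d Hd). apply HN. lia. }
  exists (exist _ l Hcl). exact Hl.
Qed.

Lemma cball_totally_bounded : totally_bounded d -> totally_bounded cball_dist.
Proof.
  intros Htb eps Heps. destruct (Htb (eps/2) ltac:(lra)) as [L HL].
  assert (Hnet : forall L : list X, exists l : list cball, forall c, In c L ->
            (exists u : cball, d c (proj1_sig u) < eps/2) ->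
            exists u, In u l /\ d c (proj1_sig u) < eps/2).
  { induction L0 as [|c L0 [l Hl]].
    - exists nil. intros c [].
    - destruct (classic (exists u : cball, d c (proj1_sig u) < eps/2)) as [[u Hu]|Hn].
      + exists (u :: l). intros c' [<-|Hc'] Hex; [exists u; split; [left|]; auto|].
        destruct (Hl c' Hc' Hex) as [u' [H1 H2]]. exists u'. split; [right|]; auto.
      + exists l. intros c' [<-|Hc'] Hex; [contradiction | auto]. }
  destruct (Hnet L) as [l Hl]. exists l. intros u. destruct (HL (proj1_sig u)) as [c [Hc1 Hc2]].
  destruct (Hl c Hc1) as [v [Hv1 Hv2]]; [exists u; rewrite (dist_sym d Hd); exact Hc2|].
  exists v. split; [exact Hv1|]. unfold cball_dist.
  pose proof (dist_triangle d Hd (proj1_sig u) c (proj1_sig v)). lra.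
Qed.

Lemma cball_center : 0 < r -> m_closure d (ball d a r) a.
Proof. intros Hr. apply (subset_closure d Hd), (ball_center d Hd), Hr. Qed.

Lemma cball_dist_center (u : cball) : 0 < r -> d a (proj1_sig u) < 2 * r.
Proof.
  destruct u as [x Hx]. intros Hr. simpl. destruct (Hx r Hr) as [y [Hy Hxy]].
  unfold ball in Hy. pose proof (dist_triangle d Hd a y x). rewrite (dist_sym d Hd y x) in H. lra.
Qed.

Lemma nowhere_dense_cball A :
  nowhere_dense d A -> nowhere_dense cball_dist (fun u => A (proj1_sig u)).
Proof.
  intros HA [[x Hx] [rho [Hrho Hb]]]. apply HA.
  destruct (Hx (rho/2) ltac:(lra)) as [y [Hy Hxy]]. unfold ball in Hy.
  assert (Ht1 := Rmin_l (rho/2) (r - d a y)). assert (Ht2 := Rmin_r (rho/2) (r - d a y)).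
  exists y, (Rmin (rho/2) (r - d a y)). split; [apply Rmin_pos; lra|].
  intros z Hz. unfold ball in Hz.
  assert (Hzb : m_closure d (ball d a r) z).
  { apply (subset_closure d Hd). unfold ball. pose proof (dist_triangle d Hd a y z). lra. }
  assert (Hc : m_closure cball_dist (fun u => A (proj1_sig u)) (exist _ z Hzb)).
  { apply Hb. unfold ball, cball_dist. simpl. pose proof (dist_triangle d Hd x y z). lra. }
  intros eps Heps. destruct (Hc eps Heps) as [[w Hw] [Hw1 Hw2]]. exists w. auto.
Qed.

Lemma meager_cball A : meager d A -> meager cball_dist (fun u => A (proj1_sig u)).
Proof.
  intros [N [HN HAN]]. exists (fun n u => N n (proj1_sig u)). split.
  - intros n. apply nowhere_dense_cball, HN.
  - intros u Hu. apply HAN, Hu.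
Qed.

End ClosedBall.

Definition cball_cms (K : CompactMetricSpace) (a : K) (r : R) (Hr : 0 < r) : CompactMetricSpace :=
  mkCMS (cball (cm_dist K) a r) (cball_dist (cm_dist K) a r) (cball_metric _ (cm_metric K) a r)
    (cball_complete _ (cm_metric K) a r (cms_complete K))
    (cball_totally_bounded _ (cm_metric K) a r (cms_totally_bounded K))
    (exist _ a (cball_center _ (cm_metric K) a r Hr)).

Definition prod_cms (K : nat -> CompactMetricSpace) (k0 : forall n, K n) : CompactMetricSpace :=
  mkCMS (prod_space (fun n => K n)) (prod_dist (fun n => K n) (fun n => cm_dist (K n)))
    (prod_dist_metric _ _ (fun n => cm_metric (K n)))
    (prod_complete _ _ (fun n => cms_complete (K n)))
    (prod_totally_bounded _ _ k0 (fun n => cms_totally_bounded (K n))) k0.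

Lemma comp_continuous {X Y Z : Type} (dX : X -> X -> R) (dY : Y -> Y -> R) (dZ : Z -> Z -> R)
  (f : X -> Y) (g : Y -> Z) :
  m_continuous dX dY f -> m_continuous dY dZ g -> m_continuous dX dZ (fun x => g (f x)).
Proof.
  intros Hf Hg x eps Heps. destruct (Hg (f x) eps Heps) as [d1 [Hd1 H1]].
  destruct (Hf x d1 Hd1) as [d2 [Hd2 H2]]. exists d2. split; [exact Hd2|]. auto.
Qed.

Lemma converges_eventually_eq {X : Type} (d : X -> X -> R) (s s' : nat -> X) l M :
  converges_to d s l -> (forall m, (M <= m)%nat -> s m = s' m) -> converges_to d s' l.
Proof.
  intros Hs Heq eps Heps. destruct (Hs eps Heps) as [N HN]. exists (max N M).
  intros n Hn. rewrite <- Heq by lia. apply HN. lia.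
Qed.

Fixpoint partial_product (G : PolishGroup) {T : nat -> Type} (h : forall n, T n -> G)
  (N : nat) (k : forall n, T n) : G :=
  match N with
  | O => pg_one G
  | S N => pg_mul G (partial_product G h N k) (h N (k N))
  end.

Section Group.
Context (G : PolishGroup).
Notation mul := (pg_mul G).
Notation inv := (pg_inv G).
Notation one := (pg_one G).
Notation dG := (pg_dist G).
Let HdG := pg_metric G.

Lemma mul_inv_cancel_l a x : mul (inv a) (mul a x) = x.
Proof. rewrite (pg_mulA G), (pg_mulVl G), (pg_mul1l G). reflexivity. Qed.

Lemma mul_cancel_inv_l a x : mul a (mul (inv a) x) = x.
Proof. rewrite (pg_mulA G), (pg_mulVr G), (pg_mul1l G). reflexivity. Qed.

Lemma mul_inv_cancel_r x a : mul (mul x a) (inv a) = x.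
Proof. rewrite <- (pg_mulA G), (pg_mulVr G), (pg_mul1r G). reflexivity. Qed.

Lemma inv_eq a b : mul a b = one -> inv a = b.
Proof. intros Hab. rewrite <- (mul_inv_cancel_l a b), Hab, (pg_mul1r G). reflexivity. Qed.

Lemma inv_mul a b : inv (mul a b) = mul (inv b) (inv a).
Proof.
  apply inv_eq. rewrite <- (pg_mulA G), (mul_cancel_inv_l b), (pg_mulVr G). reflexivity.
Qed.

Lemma inv_inv a : inv (inv a) = a.
Proof. apply inv_eq, (pg_mulVl G). Qed.

Lemma two_sided_translate_iff g B h y :
  two_sided_translate G g B h y <-> B (mul (mul (inv g) y) (inv h)).
Proof.
  split.
  - intros [b [Hb ->]].
    rewrite (pg_mulA G (inv g) (mul g b) h), mul_inv_cancel_l, mul_inv_cancel_r. exact Hb.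
  - intros Hb. exists (mul (mul (inv g) y) (inv h)). split; [exact Hb|].
    rewrite (pg_mulA G g), mul_cancel_inv_l, <- (pg_mulA G y), (pg_mulVl G), (pg_mul1r G).
    reflexivity.
Qed.

Lemma two_sided_translate_mul g B h p y t :
  two_sided_translate G g B h (mul (mul p y) t) <->
  two_sided_translate G (mul (inv p) g) B (mul h (inv t)) y.
Proof.
  rewrite !two_sided_translate_iff, !inv_mul, !inv_inv, !(pg_mulA G). reflexivity.
Qed.

Lemma const_continuous {X : Type} (dX : X -> X -> R) c : m_continuous dX dG (fun _ => c).
Proof.
  intros x eps Heps. exists 1. split; [lra|]. intros. rewrite (dist_refl dG HdG). exact Heps.
Qed.

Lemma mul_continuous {X : Type} (dX : X -> X -> R) f g :
  m_continuous dX dG f -> m_continuous dX dG g -> m_continuous dX dG (fun x => mul (f x) (g x)).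
Proof.
  intros Hf Hg x eps Heps. destruct (pg_mul_cont G (f x) (g x) eps Heps) as [del [Hdel H]].
  destruct (Hf x del Hdel) as [d1 [Hd1 H1]]. destruct (Hg x del Hdel) as [d2 [Hd2 H2]].
  exists (Rmin d1 d2). split; [apply Rmin_pos; assumption|]. intros x' Hx'.
  pose proof (Rmin_l d1 d2). pose proof (Rmin_r d1 d2). apply H; [apply H1 | apply H2]; lra.
Qed.

Lemma right_translation_uniform (K : CompactMetricSpace) (q : K -> G) :
  m_continuous (cm_dist K) dG q -> forall eps, 0 < eps ->
  exists del, 0 < del /\ forall k y, dG one y < del -> dG (q k) (mul (q k) y) < eps.
Proof.
  intros Hq eps Heps.
  assert (Hpt : forall k : K, exists p : R * R, 0 < fst p /\ 0 < snd p /\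
     (forall x' y', dG (q k) x' < fst p -> dG one y' < fst p ->
        dG (mul (q k) one) (mul x' y') < eps/2) /\
     (forall k', cm_dist K k k' < snd p -> dG (q k) (q k') < fst p)).
  { intros k. destruct (pg_mul_cont G (q k) one (eps/2) ltac:(lra)) as [eta [Heta H1]].
    destruct (Hq k eta Heta) as [rho [Hrho H2]]. exists (eta, rho). simpl. auto. }
  apply functional_choice in Hpt. destruct Hpt as [p Hp].
  destruct (cm_compact K K (fun k => ball (cm_dist K) k (snd (p k)))) as [l Hl].
  - intros k. apply (ball_open _ (cm_metric K)).
  - intros k. exists k. apply (ball_center _ (cm_metric K)), Hp.
  - set (del := fold_right (fun k m => Rmin (fst (p k)) m) 1 l).
    assert (Hdel : 0 < del /\ forall k, In k l -> del <= fst (p k)).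
    { unfold del. clear Hl. induction l as [|k l [IH1 IH2]]; simpl.
      - split; [lra | intros _ []].
      - split; [apply Rmin_pos; [apply Hp | exact IH1]|].
        intros k' [<-|Hk']; [apply Rmin_l|]. pose proof (IH2 k' Hk').
        pose proof (Rmin_r (fst (p k)) (fold_right (fun k0 m => Rmin (fst (p k0)) m) 1 l)). lra. }
    destruct Hdel as [Hdel1 Hdel2]. exists del. split; [exact Hdel1|]. intros k y Hy.
    destruct (Hl k) as [ki [Hki Hkk]]. unfold ball in Hkk.
    destruct (Hp ki) as [_ [_ [Hp3 Hp4]]]. specialize (Hp4 k Hkk). specialize (Hdel2 ki Hki).
    pose proof (Hp3 (q k) y Hp4 ltac:(lra)) as HA.
    pose proof (Hp3 (q k) one Hp4 ltac:(rewrite (dist_refl dG HdG); lra)) as HB.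
    rewrite !(pg_mul1r G) in HB. rewrite (pg_mul1r G) in HA.
    pose proof (dist_triangle dG HdG (q k) (q ki) (mul (q k) y)).
    rewrite (dist_sym dG HdG (q k) (q ki)) in H. lra.
Qed.

Lemma converges_mul_l s l c :
  converges_to dG s l -> converges_to dG (fun m => mul c (s m)) (mul c l).
Proof.
  intros Hs eps Heps. destruct (pg_mul_cont G c l eps Heps) as [del [Hdel H]].
  destruct (Hs del Hdel) as [N HN]. exists N. intros n Hn. rewrite (dist_sym dG HdG).
  apply H; [rewrite (dist_refl dG HdG); exact Hdel | rewrite (dist_sym dG HdG); auto].
Qed.

Section InfiniteProduct.
Context (T : nat -> Type) (dT : forall n, T n -> T n -> R)
  (h : forall n, T n -> G) (h_cont : forall n, m_continuous (dT n) dG (h n)).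
Notation pp := (partial_product G h).
Hypothesis step_small : forall n k, dG (pp n k) (pp (S n) k) <= half_pow n.

Lemma partial_product_continuous N : m_continuous (prod_dist T dT) dG (pp N).
Proof.
  induction N; simpl; [apply const_continuous|].
  apply mul_continuous; [exact IHN|].
  apply (comp_continuous _ (dT N)); [apply coord_continuous | apply h_cont].
Qed.

Lemma partial_product_update N k j x : (N <= j)%nat -> pp N (update k j x) = pp N k.
Proof.
  induction N; simpl; intros H; [reflexivity|].
  rewrite IHN, update_neq by lia. reflexivity.
Qed.

Lemma partial_product_cauchy k : cauchy dG (fun n => pp n k).
Proof.
  apply (geometric_cauchy dG HdG _ 1); [|lra].
  intros n. rewrite Rmult_1_l. apply step_small.
Qed.

Definition infinite_product (k : prod_space T) : G :=
  proj1_sig (constructive_indefinite_description _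
    (pg_complete G _ (partial_product_cauchy k))).

Lemma infinite_product_limit k : converges_to dG (fun n => pp n k) (infinite_product k).
Proof. unfold infinite_product. apply proj2_sig. Qed.

Lemma infinite_product_dist k n : dG (pp n k) (infinite_product k) <= 2 * half_pow n.
Proof.
  apply (limit_dist_le dG HdG _ _ _ _ (infinite_product_limit k)). exists n. intros m Hm.
  assert (Hstep : forall i, dG (pp i k) (pp (S i) k) <= 1 * half_pow i).
  { intros i. rewrite Rmult_1_l. apply step_small. }
  pose proof (geometric_dist_le dG HdG (fun i => pp i k) 1 Hstep n m Hm).
  pose proof (half_pow_pos m). lra.
Qed.

Lemma infinite_product_continuous : m_continuous (prod_dist T dT) dG infinite_product.
Proof.
  intros k eps Heps. destruct (half_pow_small (eps/6) ltac:(lra)) as [n Hn].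
  destruct (partial_product_continuous n k (eps/3) ltac:(lra)) as [del [Hdel H]].
  exists del. split; [exact Hdel|]. intros k' Hk'. specialize (H k' Hk').
  pose proof (infinite_product_dist k n). pose proof (infinite_product_dist k' n).
  pose proof (dist_triangle dG HdG (infinite_product k) (pp n k) (infinite_product k')).
  pose proof (dist_triangle dG HdG (pp n k) (pp n k') (infinite_product k')).
  rewrite (dist_sym dG HdG (infinite_product k) (pp n k)) in H2. lra.
Qed.

(* Changing the [j]-th factor changes the product only in the middle:
   the tail [inv (pp (S j) k) * infinite_product k] does not see coordinate [j]. *)
Lemma infinite_product_update k j x :
  infinite_product (update k j x) =
  mul (mul (pp j k) (h j x)) (mul (inv (pp (S j) k)) (infinite_product k)).
Proof.
  set (k' := update k j x).
  assert (Htail : forall m, (S j <= m)%nat ->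
            mul (inv (pp (S j) k')) (pp m k') = mul (inv (pp (S j) k)) (pp m k)).
  { induction 1.
    - rewrite !(pg_mulVl G). reflexivity.
    - change (pp (S m) k') with (mul (pp m k') (h m (k' m))).
      change (pp (S m) k) with (mul (pp m k) (h m (k m))).
      rewrite !(pg_mulA G), IHle. unfold k'. rewrite update_neq by lia. reflexivity. }
  assert (Hlim : mul (inv (pp (S j) k')) (infinite_product k') =
                 mul (inv (pp (S j) k)) (infinite_product k)).
  { apply (limit_unique dG HdG (fun m => mul (inv (pp (S j) k)) (pp m k))).
    - apply converges_eventually_eq with (fun m => mul (inv (pp (S j) k')) (pp m k')) (S j).
      + apply converges_mul_l, infinite_product_limit.
      + intros m Hm. apply Htail, Hm.
    - apply converges_mul_l, infinite_product_limit. }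
  assert (Hj : pp (S j) k' = mul (pp j k) (h j x)).
  { simpl. unfold k'. rewrite partial_product_update, update_eq by lia. reflexivity. }
  rewrite <- Hlim, Hj, mul_cancel_inv_l. reflexivity.
Qed.

End InfiniteProduct.

Lemma cms_prod_point (K : nat -> CompactMetricSpace) : inhabited (forall n, K n).
Proof.
  destruct (dependent_functional_choice (fun n (_ : K n) => True)) as [k _].
  - intros n. destruct (cm_nonempty (K n)) as [x]. exists x. exact Logic.I.
  - constructor. exact k.
Qed.

Lemma partial_product_comp {T T' : nat -> Type} (h : forall n, T n -> G)
  (pi : forall n, T' n -> T n) N (k : forall n, T' n) :
  partial_product G (fun n u => h n (pi n u)) N k =
  partial_product G h N (fun n => pi n (k n)).
Proof. induction N; simpl; [reflexivity|]. rewrite IHN. reflexivity. Qed.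

Definition meager_translates (K : CompactMetricSpace) (f : K -> G) (B : G -> Prop) : Prop :=
  forall g h, meager (cm_dist K) (fun k => two_sided_translate G g B h (f k)).

Lemma meager_translates_mul_l K f B e :
  meager_translates K f B -> meager_translates K (fun k => mul e (f k)) B.
Proof.
  intros Hf g h. apply (meager_sub _ _ _) with (2 := Hf (mul (inv e) g) h).
  intros k. rewrite !two_sided_translate_iff, inv_mul, inv_inv, !(pg_mulA G). auto.
Qed.

Lemma meager_translates_cball K f B a r (Hr : 0 < r) :
  meager_translates K f B -> meager_translates (cball_cms K a r Hr) (fun u => f (proj1_sig u)) B.
Proof. intros Hf g h. exact (meager_cball _ (cm_metric K) a r _ (Hf g h)). Qed.

(* Kuratowski-Ulam in the coordinate [j]: the section of the product map
   through [j] is a two-sided translate of [g j]. *)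
Lemma meager_translates_bigcup (K : nat -> CompactMetricSpace) (k0 : forall n, K n)
  (g : forall n, K n -> G) (B : nat -> G -> Prop)
  (g_cont : forall n, m_continuous (cm_dist (K n)) dG (g n))
  (step_small : forall n k,
     dG (partial_product G g n k) (partial_product G g (S n) k) <= half_pow n) :
  (forall n, borel dG (B n)) -> (forall n, meager_translates (K n) (g n) (B n)) ->
  meager_translates (prod_cms K k0) (infinite_product (fun n => K n) g step_small)
    (fun x => exists n, B n x).
Proof.
  intros HB Hg gg hh.
  set (F := infinite_product (fun n => K n) g step_small).
  apply (meager_sub _ _ (fun k => exists j, two_sided_translate G gg (B j) hh (F k))).
  { intros k [b [[j Hb] Hk]]. exists j, b. auto. }
  apply meager_bigcup. intros j.
  apply (kuratowski_ulam (fun n => K n) (fun n => cm_dist (K n)) (fun n => cm_metric (K n)) j).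
  - intros n. apply cms_complete.
  - apply cms_totally_bounded.
  - apply (baire_property_ext _ (fun k => B j (mul (mul (inv gg) (F k)) (inv hh)))).
    + apply (borel_preimage_baire_property _ dG);
        [apply prod_dist_metric; intros n; apply cm_metric | | apply HB].
      apply mul_continuous; [|apply const_continuous].
      apply mul_continuous; [apply const_continuous|].
      apply (infinite_product_continuous (fun n => K n) (fun n => cm_dist (K n))), g_cont.
    + intros k. rewrite two_sided_translate_iff. tauto.
  - intros k.
    set (p := partial_product G g j k).
    set (t := mul (inv (partial_product G g (S j) k)) (F k)).
    apply (meager_sub _ _ _) with (2 := Hg j (mul (inv p) gg) (mul hh (inv t))).
    intros x Hx. unfold F in Hx. rewrite infinite_product_update in Hx.
    apply two_sided_translate_mul in Hx. exact Hx.
Qed.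

(* Recentre each [f n] so that [f n (a n) = one], then restrict it to a closed
   ball around [a n] so small that multiplying by its values moves the partial
   products by less than [half_pow n].  The smallness is measured on the full
   product of the [K n], which contains the product of the balls. *)
Lemma shrink_witnesses (K : nat -> CompactMetricSpace) (f : forall n, K n -> G) :
  (forall n, m_continuous (cm_dist (K n)) dG (f n)) ->
  exists (K' : nat -> CompactMetricSpace) (g : forall n, K' n -> G),
    (forall n, m_continuous (cm_dist (K' n)) dG (g n)) /\
    (forall n B, meager_translates (K n) (f n) B -> meager_translates (K' n) (g n) B) /\
    (forall n k, dG (partial_product G g n k) (partial_product G g (S n) k) <= half_pow n).
Proof.
  intros Hf. destruct (cms_prod_point K) as [a].
  set (h := fun n x => mul (inv (f n (a n))) (f n x)).
  assert (Hh : forall n, m_continuous (cm_dist (K n)) dG (h n)).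
  { intros n. apply mul_continuous; [apply const_continuous | apply Hf]. }
  assert (Hdel : forall n, exists del, 0 < del /\ forall k y, dG one y < del ->
            dG (partial_product G h n k) (mul (partial_product G h n k) y) < half_pow n).
  { intros n. apply (right_translation_uniform (prod_cms K a)); [|apply half_pow_pos].
    apply (partial_product_continuous (fun n => K n) (fun n => cm_dist (K n))), Hh. }
  apply functional_choice in Hdel. destruct Hdel as [del Hdel].
  assert (Hrho : forall n, exists rho, 0 < rho /\
            forall x, cm_dist (K n) (a n) x < 2 * rho -> dG one (h n x) < del n).
  { intros n. destruct (Hh n (a n) (del n) (proj1 (Hdel n))) as [rho [Hrho H]].
    exists (rho / 2). split; [lra|]. intros x Hx.
    replace one with (h n (a n)) by apply (pg_mulVl G). apply H. lra. }
  apply functional_choice in Hrho. destruct Hrho as [rho Hrho].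
  exists (fun n => cball_cms (K n) (a n) (rho n) (proj1 (Hrho n))).
  exists (fun n u => h n (proj1_sig u)). split; [|split].
  - intros n u eps Heps. destruct (Hh n (proj1_sig u) eps Heps) as [d1 [Hd1 H]].
    exists d1. split; [exact Hd1|]. intros u' Hu'. apply H, Hu'.
  - intros n B HB. apply meager_translates_cball, meager_translates_mul_l, HB.
  - intros n k. simpl partial_product at 2.
    rewrite !(partial_product_comp h (fun n (u : cball_cms (K n) (a n) (rho n) _) => proj1_sig u)).
    left. apply (proj2 (Hdel n)), Hrho, (cball_dist_center _ (cm_metric (K n))), Hrho.
Qed.

Lemma haar_meager_bigcup (A : nat -> G -> Prop) :
  (forall n, haar_meager G (A n)) -> haar_meager G (fun x => exists n, A n x).
Proof.
  intros HA. apply functional_choice in HA. destruct HA as [B HB].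
  assert (HK : forall n, exists (K : CompactMetricSpace) (f : K -> G),
             m_continuous (cm_dist K) dG f /\ meager_translates K f (B n)).
  { intros n. apply HB. }
  apply functional_choice in HK. destruct HK as [K HK].
  apply dependent_functional_choice in HK. destruct HK as [f Hf].
  destruct (shrink_witnesses K f) as [K' [g [Hg [Hmeager Hstep]]]]; [apply Hf|].
  destruct (cms_prod_point K') as [k0].
  exists (fun x => exists n, B n x). split; [|split].
  - apply borel_union. apply HB.
  - intros x [n Hn]. exists n. apply HB, Hn.
  - exists (prod_cms K' k0), (infinite_product (fun n => K' n) g Hstep). split.
    + apply (infinite_product_continuous (fun n => K' n) (fun n => cm_dist (K' n))), Hg.
    + apply meager_translates_bigcup; [exact Hg | apply HB |].
      intros n. apply Hmeager, Hf.
Qed.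

End Group.

Theorem theorem2p2 (G : PolishGroup) :
  (forall A C : G -> Prop,
      haar_meager G A -> (forall x, C x -> A x) -> haar_meager G C) /\
  (forall A : nat -> G -> Prop,
      (forall n, haar_meager G (A n)) ->
      haar_meager G (fun x => exists n, A n x)).
Proof.
  split.
  - intros A C [B [HB [HAB HK]]] HCA. exists B. auto.
  - apply haar_meager_bigcup.
Qed.
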